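(* For every integer $k\ge1$, $N(2k+5,k)=1$.
   Context: For $n>k\ge1$, $N(n,k)$ is the nullity of the $n\times n$ skew-symmetric Toeplitz matrix $A(n,k)$ whose first $k$ superdiagonals have all entries $1$ and whose remaining superdiagonals have all entries $0$. *)

From mathcomp Require Import all_boot all_order all_algebra.
Set Implicit Arguments. Unset Strict Implicit. Unset Printing Implicit Defensive.
Import GRing.Theory Num.Theory.
Local Open Scope ring_scope.

Definition Amat (n k : nat) : 'M[rat]_n :=
  \matrix_(i < n, j < n)
    (if (i < j)%N && (j - i <= k)%N then 1
     else if (j < i)%N && (i - j <= k)%N then -1 else 0).

Definition Nnull (n k : nat) : nat := (n - \rank (Amat n k))%N.

(* A(n,k) is skew-symmetric of odd order n = 2k+5, hence singular.  For the
   upper bound let u be a left null vector with zero coordinate sum, and P its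
   prefix sums.  The j-th entry of uA is the sum of the k entries of u left of j
   minus the sum of the k entries right of j, so uA = 0 makes the window sums
   q m = P m - P (m - k - 1) k-periodic: q m = c_r for the residue r of m.
   Since P vanishes from n on, telescoping P (s + 2(k+1)) = 0 yields
   c_{r+2} + c_{r+1} + c_r = 0 for k - 1 consecutive residues r, plus two
   four-term relations.  The triple relations make c 3-periodic along a run of
   k + 1 residues; comparing the two ends of the run according to k mod 3 forces
   c = 0.  Hence P = 0 and u = 0: the kernel meets the zero-sum hyperplane
   trivially, so it has dimension at most 1. *)

From mathcomp Require Import all_boot all_order all_algebra.
From mathcomp Require Import zify ring lra.
Import GRing.Theory Num.Theory.
Local Open Scope ring_scope.

Section PeriodicTriples.

Context {R : realDomainType} {k : nat} {c : nat -> R}.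
Hypothesis k_gt0 : (0 < k)%N.
Hypothesis c_periodic : forall i, c (i + k) = c i.
Hypothesis c_triple : forall r, (3 <= r <= k.+1)%N -> c r.+2 + c r.+1 + c r = 0.
Hypothesis c_1234 : c 4 + c 3 + c 2 + c 1 = 0.
Hypothesis c_2345 : c 5 + c 4 + c 3 + c 2 = 0.

Lemma periodic_zero_of_initial : (forall i, (1 <= i <= k)%N -> c i = 0) -> forall i, c i = 0.
Proof.
move=> c_init; elim/ltn_ind=> i IH.
case: (posnP i) => [->|i_gt0].
  by rewrite -(c_periodic 0) add0n c_init //; lia.
case: (leqP i k) => [le_ik|lt_ki]; first by rewrite c_init //; lia.
by rewrite -(subnK (ltnW lt_ki)) c_periodic IH //; lia.
Qed.

Lemma c_shift3 (j : nat) : (3 <= j <= k)%N -> c j.+3 = c j.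
Proof.
move=> j_range; have := c_triple j.+1; have := c_triple j.
move=> /(_ ltac:(lia)) t0 /(_ ltac:(lia)) t1; lra.
Qed.

Lemma c_mod3 (i : nat) : (3 <= i <= k + 3)%N -> c i = c (3 + (i - 3) %% 3).
Proof.
elim/ltn_ind: i => i IH i_range.
case: (ltnP i 6) => [i_lt6|i_ge6].
  by rewrite modn_small ?subnKC //; lia.
have [j def_i j_ge3] : exists2 j, i = (j + 3)%N & (3 <= j)%N by exists (i - 3)%N; lia.
subst i.
rewrite addnK addn3 c_shift3; last by lia.
rewrite IH; [| lia ..].
by rewrite -[in RHS](subnK j_ge3) modnDr.
Qed.

Lemma periodic_triples_zero : forall i, c i = 0.
Proof.
apply: periodic_zero_of_initial => i i_range.
have [k_eq1 | k_ge2] := leqP k 1.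
  have k1 : k = 1%N by lia.
  have c_step j : c j.+1 = c j by rewrite -(c_periodic j) k1 addn1.
  have -> : i = 1%N by lia.
  move: c_1234; rewrite !c_step; lra.
have c345 : c 5 + c 4 + c 3 = 0 by apply: (c_triple 3); lia.
have c2 : c 2 = 0 by move: c_2345; lra.
have c123 : c 3 + c 2 + c 1 = 0.
  have := c_triple k.+1 ltac:(lia).
  by rewrite -[k.+3]add3n -[k.+2]add2n -[k.+1]add1n !c_periodic.
have c4 : c 4 = 0 by move: c_1234; lra.
have c3 : c 3 = 0.
  have c_k3 : c 3 = c (3 + k %% 3) by rewrite -(c_periodic 3) c_mod3 ?addKn //; lia.
  have c_k2 : c 2 = c (3 + (k - 1) %% 3).
    by rewrite -(c_periodic 2) c_mod3; [congr (c (3 + _ %% 3)) | ]; lia.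
  have [[k0 k1] | [k1 | k2]] :
      (k %% 3 = 0 /\ (k - 1) %% 3 = 2 \/ k %% 3 = 1 \/ k %% 3 = 2)%N by lia.
  - by move: c_k2; rewrite k1 c2; lra.
  - by move: c_k3; rewrite k1 c4.
  - by move: c_k3; rewrite k2; lra.
have c1 : c 1 = 0 by lra.
have [i_lt3 | i_ge3] := ltnP i 3.
  by have [-> | ->] : i = 1%N \/ i = 2%N by lia.
rewrite c_mod3; last by lia.
have [-> | [-> | ->]] : ((i - 3) %% 3 = 0 \/ (i - 3) %% 3 = 1 \/ (i - 3) %% 3 = 2)%N by lia.
all: by [|lra].
Qed.

End PeriodicTriples.

Section PrefixRecurrence.

Context {R : realDomainType} {k : nat} {P : nat -> R}.
Hypothesis k_gt0 : (0 < k)%N.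
Hypothesis P0 : P 0 = 0.
Hypothesis P_tail : forall m, (2 * k + 5 <= m)%N -> P m = 0.
Hypothesis P_rec :
  forall j, (j < 2 * k + 5)%N -> P j - P (j - k) = P (j + k).+1 - P j.+1.

Let q (m : nat) : R := P m - P (m - k.+1).

Lemma q_periodic m : (1 <= m <= 2 * k + 5)%N -> q (m + k) = q m.
Proof.
case: m => [//|j] j_range; have := P_rec j ltac:(lia).
by rewrite /q addSn !subSS addnK; lra.
Qed.

Lemma q_tail_relation s : (3 <= s <= k + 3)%N ->
  q (s + k.+1 + k.+1) + q (s + k.+1) + q s + q (s - k.+1) = 0.
Proof.
move=> s_range; have P_add x : P (x + k.+1) = q (x + k.+1) + P x.
  by rewrite /q addnK; ring.
have : P (s + k.+1 + k.+1) = 0 by apply: P_tail; lia.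
rewrite !P_add.
have -> : P s = q s + P (s - k.+1) by rewrite /q; ring.
have -> : P (s - k.+1) = q (s - k.+1).
  by rewrite /q (_ : s - k.+1 - k.+1 = 0)%N ?P0 ?subr0 //; lia.
by rewrite !addrA.
Qed.

Let c (i : nat) : R := q (i %% k + k).

Lemma c_periodic i : c (i + k) = c i.
Proof. by rewrite /c modnDr. Qed.

Lemma q_eq_c m : (1 <= m <= 3 * k + 5)%N -> q m = c m.
Proof.
rewrite /c; elim/ltn_ind: m => m IH m_range.
have [le_mk | lt_km] := leqP m k.
  have [lt_mk | ->] : (m < k)%N \/ m = k by lia.
  - by rewrite modn_small // q_periodic //; lia.
  - by rewrite modnn.
have [j def_m] : exists j, m = (j + k)%N by exists (m - k)%N; lia.
subst m; rewrite q_periodic; last by lia.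
by rewrite IH ?modnDr //; lia.
Qed.

Lemma prefix_recurrence_zero m : P m = 0.
Proof.
have q0 : q 0 = 0 by rewrite /q sub0n subrr.
have c0 : forall i, c i = 0.
  apply: (periodic_triples_zero k_gt0 c_periodic).
  - move=> r r_range; have := q_tail_relation r ltac:(lia).
    rewrite (_ : r - k.+1 = 0)%N; last by lia.
    rewrite q0 addr0 !q_eq_c; [| lia ..].
    rewrite (_ : r + k.+1 + k.+1 = r.+2 + k + k)%N; last by lia.
    by rewrite (_ : r + k.+1 = r.+1 + k)%N ?c_periodic //; lia.
  - have := q_tail_relation (2 + k) ltac:(lia).
    rewrite !q_eq_c; [| lia ..].
    rewrite (_ : 2 + k + k.+1 + k.+1 = 4 + k + k + k)%N; last by lia.
    rewrite (_ : 2 + k + k.+1 = 3 + k + k)%N; last by lia.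
    rewrite (_ : 2 + k - k.+1 = 1)%N; last by lia.
    by rewrite !c_periodic.
  - have := q_tail_relation (3 + k) ltac:(lia).
    rewrite !q_eq_c; [| lia ..].
    rewrite (_ : 3 + k + k.+1 + k.+1 = 5 + k + k + k)%N; last by lia.
    rewrite (_ : 3 + k + k.+1 = 4 + k + k)%N; last by lia.
    rewrite (_ : 3 + k - k.+1 = 2)%N; last by lia.
    by rewrite !c_periodic.
elim/ltn_ind: m => m IH.
have [m_ge | m_lt] := leqP (2 * k + 5) m; first exact: P_tail.
have [-> | m_gt0] := posnP m; first exact: P0.
have -> : P m = q m + P (m - k.+1) by rewrite /q; ring.
rewrite q_eq_c ?c0 ?add0r; last by lia.
by rewrite IH //; lia.
Qed.

End PrefixRecurrence.

Definition prefix_sum {V : zmodType} {n : nat} (u : 'rV[V]_n) (m : nat) : V :=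
  \sum_(i < n | (i < m)%N) u 0 i.

Section PrefixSum.

Context {V : zmodType} {n : nat} (u : 'rV[V]_n).

Lemma prefix_sum0 : prefix_sum u 0 = 0.
Proof. by rewrite /prefix_sum big_pred0. Qed.

Lemma prefix_sum_total m : (n <= m)%N -> prefix_sum u m = \sum_i u 0 i.
Proof.
move=> le_nm; apply: eq_bigl => i.
exact: leq_trans (ltn_ord i) le_nm.
Qed.

Lemma prefix_sumS_sub (i : 'I_n) : prefix_sum u i.+1 - prefix_sum u i = u 0 i.
Proof.
rewrite /prefix_sum (bigD1 i) //= (eq_bigl (fun j : 'I_n => (j < i)%N)) ?addrK //.
by move=> j; rewrite ltnS andbC -ltn_neqAle.
Qed.

End PrefixSum.

Lemma Amat_entry (n k : nat) (i j : 'I_n) :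
  Amat n k i j =
  ((i < j)%N%:R - (i < j - k)%N%:R) - ((i < (j + k).+1)%N%:R - (i < j.+1)%N%:R).
Proof.
rewrite mxE.
case: (ltngtP i j) => [lt_ij | gt_ij | eq_ij] /=.
- have -> : (i < (j + k).+1)%N by lia.
  have -> : (i < j.+1)%N by lia.
  have -> : (i < j - k)%N = ~~ (j - i <= k)%N by lia.
  by case: (j - i <= k)%N => /=; ring.
- have -> : (i < j.+1)%N = false by lia.
  have -> : (i < j - k)%N = false by lia.
  have -> : (i < (j + k).+1)%N = (i - j <= k)%N by lia.
  by case: (i - j <= k)%N => /=; ring.
- rewrite eq_ij; have -> : (j < j - k)%N = false by lia.
  by rewrite !ltnS leqnn leq_addr /= !subrr.
Qed.

Lemma mulmx_Amat {n : nat} (k : nat) (u : 'rV[rat]_n) (j : 'I_n) :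
  (u *m Amat n k) 0 j =
  (prefix_sum u j - prefix_sum u (j - k)) - (prefix_sum u (j + k).+1 - prefix_sum u j.+1).
Proof.
rewrite mxE /prefix_sum !(big_mkcond (fun i : 'I_n => (i < _)%N)) -!sumrB.
by apply: eq_bigr => i _; rewrite Amat_entry !mulrBr !mulr_natr !mulrb.
Qed.

Lemma Amat_skew (n k : nat) : (Amat n k)^T = - Amat n k.
Proof.
apply/matrixP => i j; rewrite !mxE.
by case: (ltngtP i j) => _ /=; try case: ifP; rewrite ?opprK ?oppr0.
Qed.

Lemma det_skew_odd (R : numDomainType) (n : nat) (A : 'M[R]_n) :
  A^T = - A -> odd n -> \det A = 0.
Proof.
move=> skewA odd_n; apply/eqP.
have := det_tr A; rewrite skewA -scaleN1r detZ -signr_odd odd_n expr1 mulN1r.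
by move/eqP; rewrite eq_sym -subr_eq0 opprK -mulr2n mulrn_eq0.
Qed.

Lemma mxrank_le1_inj_functional {F : fieldType} {m n : nat}
    (U : 'M[F]_(m, n)) (v : 'cV[F]_n) :
  (forall u : 'rV_n, (u <= U)%MS -> u *m v = 0 -> u = 0) -> (\rank U <= 1)%N.
Proof.
move=> inj_v; rewrite -(mxrank_mul_ker U v).
have -> : (U :&: kermx v)%MS = 0.
  apply/row_matrixP => i; rewrite row0; apply: inj_v.
    exact: submx_trans (row_sub i _) (capmxSl _ _).
  by apply/sub_kermxP; exact: submx_trans (row_sub i _) (capmxSr _ _).
by rewrite mxrank0 addn0 rank_leq_col.
Qed.

Lemma Amat_ker_sum0 (k : nat) (u : 'rV[rat]_(2 * k + 5)) :
  (0 < k)%N -> u *m Amat (2 * k + 5) k = 0 -> \sum_i u 0 i = 0 -> u = 0.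
Proof.
move=> k_gt0 uA0 sum0.
have P_tail m : (2 * k + 5 <= m)%N -> prefix_sum u m = 0.
  by move=> le_m; rewrite prefix_sum_total.
have P_rec j : (j < 2 * k + 5)%N ->
    prefix_sum u j - prefix_sum u (j - k) = prefix_sum u (j + k).+1 - prefix_sum u j.+1.
  move=> lt_j; apply/eqP; rewrite -subr_eq0.
  by rewrite -(mulmx_Amat k u (Ordinal lt_j)) uA0 mxE.
have P0 := prefix_recurrence_zero k_gt0 (prefix_sum0 u) P_tail P_rec.
by apply/rowP => i; rewrite mxE -prefix_sumS_sub !P0 subrr.
Qed.

Theorem theorem8p5 (k : nat) : (1 <= k)%N -> Nnull (2 * k + 5) k = 1%N.
Proof.
move=> k_gt0; rewrite /Nnull -mxrank_ker; apply/anti_leq/andP; split.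
  apply: (mxrank_le1_inj_functional _ (const_mx 1)) => u /sub_kermxP uA0 u1.
  apply: Amat_ker_sum0 k_gt0 uA0 _.
  move/matrixP/(_ 0 0): u1; rewrite !mxE => u1.
  by rewrite -[RHS]u1; apply: eq_bigr => i _; rewrite mxE mulr1.
rewrite mxrank_ker subn_gt0 ltnNge row_leq_rank row_free_unit unitmxE unitfE.
by rewrite det_skew_odd ?Amat_skew ?eqxx // oddD oddM.
Qed.
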